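(* Let $G=(V,E)$ be a finite graph with a staggered quantum walk given by tessellations $\mathcal{T}_1,\dots,\mathcal{T}_l$ (each polygon $P$ carrying a unit vector $\ket{P}=\sum_{v\in P}c_v^{(P)}\ket{v}$ supported on $P$), with local operators $U_j=2\sum_{P\in\mathcal{T}_j}\ket{P}\bra{P}-I$ on $\mathcal{H}^{|V|}$. Fix a vertex $u\in V$, and for each $j$ let $P_j$ be the polygon of $\mathcal{T}_j$ containing $u$, with $\ket{P_j}=\sum_{v\in P_j}c_v^{(j)}\ket{v}$. Let $\tilde G=(\tilde V,\tilde E)$, $\tilde V=\{0,1,\dots,k-1\}\cup (V\setminus\{u\})$, be the graph obtained by replacing $u$ with a $k$-clique on new vertices $0,\dots,k-1$, each adjacent to every neighbour of $u$ in $G$. Fix a unit vector $\ket{\tilde u}=\sum_{i=0}^{k-1}u_i\ket{i}\in\mathcal{H}^{|\tilde V|}$. Define the staggered quantum walk on $\tilde G$ with tessellations $\tilde{\mathcal{T}}_j$ obtained from $\mathcal{T}_j$ by replacing $P_j$ with $\tilde P_j=(P_j\setminus\{u\})\cup\{0,\dots,k-1\}$ and keeping all other polygons, where $\ket{\tilde P_j}=\sum_{v\in P_j\setminus\{u\}}c_v^{(j)}\ket{v}+c_u^{(j)}\ket{\tilde u}$ and every other polygon keeps its vector; set $\tilde U_j=2\sum_{\tilde P\in\tilde{\mathcal{T}}_j}\ket{\tilde P}\bra{\tilde P}-I$ on $\mathcal{H}^{|\tilde V|}$. Let $\ket{\psi}=\sum_{v\in V}a_v\ket{v}\in\mathcal{H}^{|V|}$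 be arbitrary and define $\ket{\tilde\psi}=\sum_{v\in V\setminus\{u\}}a_v\ket{v}+a_u\ket{\tilde u}\in\mathcal{H}^{|\tilde V|}$. Then for every $j\in\{1,\dots,l\}$, $$\braket{v|\tilde U_j|\tilde\psi}=\braket{v|U_j|\psi}\quad\text{for all } v\in V\setminus\{u\},\qquad \braket{\tilde u|\tilde U_j|\tilde\psi}=\braket{u|U_j|\psi}.$$ In particular, the local operators preserve the amplitudes of all vertices outside the intersection, and the probability of measuring (in the computational basis) $u$ after applying $U_j$ to $\ket\psi$ equals the probability of measuring one of the clique vertices $0,\dots,k-1$ after applying $\tilde U_j$ to $\ket{\tilde\psi}$.
   Context: A tessellation of a graph is a partition of its vertex set into cliques, called polygons; a tessellation cover is a set of tessellations such that every edge has both endpoints in a common polygon of some tessellation. A staggered quantum walk (SQW) on a graph with tessellation cover $\{\mathcal{T}_1,\dots,\mathcal{T}_l\}$ assigns to each polygon $P$ a unit vector $\ket{P}$ in the Hilbert space spanned by the computational basis $\{\ket{v}\}$ of vertices, supported on the vertices of $P$; its local operators are the reflections $U_j=2\sum_{P\in\mathcal{T}_j}\ket P\bra P-I$ and its evolution operator is $U=U_1U_2\cdots U_l$. Since each tessellation is a partition, $u$ lies in exactly one polygon $P_j$ of each $\mathcal{T}_j$. The same pair of walks arises in the ''intersection reduction'' direction: a SQW on $\tilde G$ in which the $k$ vertices of an intersection $I=\tilde P_1\cap\dots\cap\tilde P_l$ have, in every $\ket{\tilde P_j}$, amplitudes proportional to a common unit vector $\ket{\tilde u}$ supported on $I$,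 is reduced by collapsing $I$ to a single vertex $u$ and replacing $\ket{\tilde u}$ by $\ket u$. Inner products are conjugate-linear in the first argument. *)

(* Scalars: an arbitrary numClosedFieldType C (e.g. algC or
   complex R), which carries the complex conjugation z^*. *)
From HB Require Import structures.
From mathcomp Require Import all_boot all_order all_algebra.
Set Implicit Arguments. Unset Strict Implicit. Unset Printing Implicit Defensive.
Import Order.TTheory GRing.Theory Num.Theory.
Local Open Scope ring_scope.

Section SQW.
Variable C : numClosedFieldType.

Definition inner (X : finType) (x y : X -> C) : C := \sum_(w : X) (x w)^* * y w.

(* local operator U = 2 sum_{P in T} |P><P| - I applied to psi;
   vec P is the vector |P> attached to polygon P *)
Definition sqw_op (X : finType) (T : {set {set X}}) (vec : {set X} -> X -> C)
  (psi : X -> C) : X -> C :=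
  fun v => 2 * (\sum_(P in T) vec P v * inner (vec P) psi) - psi v.

Definition is_tessellation (X : finType) (adj : rel X) (T : {set {set X}}) : Prop :=
  partition T [set: X] /\
  (forall P, P \in T -> forall x y, x \in P -> y \in P -> x != y -> adj x y).

Definition polygon_vectors (X : finType) (T : {set {set X}}) (vec : {set X} -> X -> C)
  : Prop :=
  forall P, P \in T ->
    inner (vec P) (vec P) = 1 /\ (forall v, v \notin P -> vec P v = 0).

Definition tessellation_cover (X : finType) (adj : rel X) (l : nat)
  (T : 'I_l -> {set {set X}}) : Prop :=
  (forall j, is_tessellation adj (T j)) /\
  (forall x y, adj x y -> exists j, exists2 P, P \in T j & (x \in P) && (y \in P)).

Section Expand.
Variables (V : finType) (u : V) (k : nat).

Definition tV : finType := ('I_k + {v : V | v != u})%type.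

Definition liftS (P : {set V}) : {set tV} :=
  [set x : tV | match x with inl _ => u \in P | inr w => val w \in P end].

Definition unliftS (Q : {set tV}) : {set V} :=
  [set v : V | match insub v with
               | Some w => inr w \in Q
               | None => [exists i : 'I_k, inl i \in Q] end].

Variable ut : 'I_k -> C.

Definition tvec_u : tV -> C :=
  fun x => match x with inl i => ut i | inr _ => 0 end.

Definition tpoly_vec (c : V -> C) (P : {set V}) : tV -> C :=
  fun x => match x with
           | inl i => if u \in P then c u * ut i else 0
           | inr w => c (val w) end.

Definition tTess (T : {set {set V}}) : {set {set tV}} := [set liftS P | P in T].
Definition tVec (vec : {set V} -> V -> C) (Q : {set tV}) : tV -> C :=
  tpoly_vec (vec (unliftS Q)) (unliftS Q).

Definition tstate (a : V -> C) : tV -> C :=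
  fun x => match x with inl i => a u * ut i | inr w => a (val w) end.
End Expand.
End SQW.

(* The map a |-> tstate a, which spreads the amplitude of u over the clique
   along the unit vector |u~>, is an isometric embedding; it sends each
   polygon vector |P> to |P~>, and P |-> P~ is a bijection between the
   tessellations.  Hence the expanded local operator applied to tstate a is
   tstate of the original local operator applied to a, and the three
   identities are read off from the shape of tstate. *)
From HB Require Import structures.
From mathcomp Require Import all_boot all_order all_algebra.

Set Implicit Arguments.
Unset Strict Implicit.
Unset Printing Implicit Defensive.

Import Order.TTheory GRing.Theory Num.Theory.
Local Open Scope ring_scope.

Lemma eq_inner (C : numClosedFieldType) (X : finType) (x x' y y' : X -> C) :
  x =1 x' -> y =1 y' -> inner x y = inner x' y'.
Proof. by move=> ex ey; apply: eq_bigr => w _; rewrite ex ey. Qed.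

Section Expansion.
Variables (C : numClosedFieldType) (V : finType) (u : V) (k : nat).
Variable ut : 'I_k -> C.

Local Notation tstate := (@tstate C V u k ut).
Local Notation tpoly_vec := (@tpoly_vec C V u k ut).
Local Notation tvec_u := (@tvec_u C V u k ut).
Local Notation tVec := (@tVec C V u k ut).

Lemma tpoly_vec_tstate (c : V -> C) (P : {set V}) :
  (u \notin P -> c u = 0) -> tpoly_vec c P =1 tstate c.
Proof. by move=> cP [i|w] //=; case: ifPn => // /cP ->; rewrite mul0r. Qed.

Hypothesis ut_unit : \sum_(i < k) (ut i)^* * ut i = 1.

Lemma clique_gt0 : (0 < k)%N.
Proof.
by case: k ut ut_unit => // ut0; rewrite big_ord0 => /eqP; rewrite eq_sym oner_eq0.
Qed.

Lemma liftSK : cancel (liftS u k) (@unliftS V u k).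
Proof.
move=> P; apply/setP => v; rewrite inE.
case: insubP => [w _ <-|/negbNE/eqP->]; first by rewrite inE.
apply/existsP/idP => [[i]|uP]; first by rewrite inE.
by exists (Ordinal clique_gt0); rewrite inE.
Qed.

Lemma inner_tstate (b a : V -> C) : inner (tstate b) (tstate a) = inner b a.
Proof.
rewrite /inner big_sumType /= [RHS](bigD1 u) //=; congr (_ + _); last first.
  by rewrite (big_sub (fun v => v != u)).
under eq_bigr do rewrite rmorphM mulrACA.
by rewrite -mulr_sumr ut_unit mulr1.
Qed.

Lemma inner_tvec_u_tstate (a : V -> C) : inner tvec_u (tstate a) = a u.
Proof.
rewrite /inner big_sumType /= [X in _ + X]big1 ?addr0 => [|w _]; last first.
  by rewrite conjC0 mul0r.
under eq_bigr do rewrite mulrCA.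
by rewrite -mulr_sumr ut_unit mulr1.
Qed.

Lemma clique_mass_tstate (a : V -> C) :
  \sum_(i < k) `|tstate a (inl i)| ^+ 2 = `|a u| ^+ 2.
Proof.
under eq_bigr do rewrite /= normrM exprMn [`|ut _| ^+ 2]normCKC.
by rewrite -mulr_sumr ut_unit mulr1.
Qed.

Lemma sqw_op_tstate (T : {set {set V}}) (vec : {set V} -> V -> C) (a : V -> C) :
  {in T, forall P : {set V}, u \notin P -> vec P u = 0} ->
  sqw_op (tTess u k T) (tVec vec) (tstate a) =1 tstate (sqw_op T vec a).
Proof.
move=> vec_supp x; rewrite /sqw_op big_imset /=; last exact: in2W (can_inj liftSK).
rewrite (eq_bigr (fun P => tstate (vec P) x * inner (vec P) a)); last first.
  move=> P /vec_supp supp; rewrite /tVec liftSK (tpoly_vec_tstate supp).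
  by rewrite (eq_inner (tpoly_vec_tstate supp) (frefl _)) inner_tstate.
case: x => [i|w] //=; rewrite mulrBl -mulrA big_distrl /=.
by under [in RHS]eq_bigr do rewrite mulrAC.
Qed.

End Expansion.

Theorem theorem1 (C : numClosedFieldType) (V : finType) (adj : rel V)
  (l : nat) (T : 'I_l -> {set {set V}}) (vec : 'I_l -> {set V} -> V -> C)
  (u : V) (k : nat) (ut : 'I_k -> C) (a : V -> C) :
  symmetric adj -> irreflexive adj ->
  tessellation_cover adj T ->
  (forall j, polygon_vectors (T j) (vec j)) ->
  \sum_(i < k) (ut i)^* * ut i = 1 ->
  forall j : 'I_l,
    let U_psi := sqw_op (T j) (vec j) a in
    let tU_tpsi := sqw_op (tTess u k (T j)) (@tVec C V u k ut (vec j)) (@tstate C V u k ut a) in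
    [/\ forall w : {v : V | v != u}, tU_tpsi (inr w) = U_psi (val w),
        inner (@tvec_u C V u k ut) tU_tpsi = U_psi u
      & \sum_(i < k) `|tU_tpsi (inl i)| ^+ 2 = `|U_psi u| ^+ 2].
Proof.
move=> _ _ _ vec_poly ut_unit j U_psi tU_tpsi.
have vec_supp : {in T j, forall P : {set V}, u \notin P -> vec j P u = 0}.
  by move=> P /(vec_poly j)[_]; apply.
have lift_U := sqw_op_tstate ut_unit a vec_supp.
split=> [w||]; first by rewrite /tU_tpsi lift_U.
  by rewrite (eq_inner (frefl _) lift_U) inner_tvec_u_tstate.
by under eq_bigr do rewrite /tU_tpsi lift_U; rewrite clique_mass_tstate.
Qed.
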